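(* Let $d\ge1$, $0<\mu\le L$, let $A\in\mathbb{R}^{d\times d}$ be symmetric with $\mu I\preceq A\preceq LI$, $b\in\mathbb{R}^d$, $f(x)=\frac12x^\top Ax+b^\top x$, and let $\{x_t\},\{G_t\}$ be generated by Sharpened-BFGS for quadratics from an arbitrary $x_0$, assuming $\nabla f(x_t)\neq0$ for all $t$ considered. Let $\theta_t:=\theta(A,G_t,x_{t+1}-x_t)$ and $\sigma_t:=\sigma(A,G_t)$. Then for all $t\ge0$, $$\sigma_{t+1}\le\left(1-\frac{\mu}{dL}\right)\left(\sigma_t-\theta_t^2\right),$$ and for all $t\ge1$, $$\sum_{i=0}^{t-1}\frac{\theta_i^2}{\left(1-\frac{\mu}{dL}\right)^i}\le\sigma_0.$$
   Context: For symmetric positive definite $A,G\in\mathbb{R}^{d\times d}$ and $u\in\mathbb{R}^d\setminus\{0\}$, the BFGS operator is $\mathrm{BFGS}(A,G,u):=G-\frac{Guu^\top G}{u^\top Gu}+\frac{Auu^\top A}{u^\top Au}$. The greedy vector is $\bar u(A,G):=\arg\max_{u\in\{e_1,\dots,e_d\}}\frac{u^\top Gu}{u^\top Au}$ (ties broken arbitrarily). Define $\theta(A,G,u):=\left(\frac{u^\top (G-A)A^{-1}(G-A)u}{u^\top GA^{-1}Gu}\right)^{1/2}$ and $\sigma(A,G):=\mathrm{Tr}(A^{-1}G)-d$. Sharpened-BFGS for quadratics: set $G_0=LI$; for $t=0,1,2,\dots$: $x_{t+1}=x_t-G_t^{-1}\nabla f(x_t)$, $s_t=x_{t+1}-x_t$,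 $\bar G_t=\mathrm{BFGS}(A,G_t,s_t)$, $\bar u=\bar u(A,\bar G_t)$, $G_{t+1}=\mathrm{BFGS}(A,\bar G_t,\bar u)$. *)

From mathcomp Require Import all_boot all_order all_algebra.
Set Implicit Arguments. Unset Strict Implicit. Unset Printing Implicit Defensive.
Import Order.TTheory GRing.Theory Num.Theory.
Local Open Scope ring_scope.

Section Defs.
Variables (R : rcfType) (d : nat).

Definition qf (M : 'M[R]_d) (u : 'cV[R]_d) : R := (u^T *m M *m u) 0 0.

Definition psdmx (M : 'M[R]_d) : Prop := forall v : 'cV[R]_d, 0 <= qf M v.

Definition symmx (M : 'M[R]_d) : Prop := M^T = M.

Definition fquad (A : 'M[R]_d) (b : 'cV[R]_d) (x : 'cV[R]_d) : R :=
  2^-1 * qf A x + (b^T *m x) 0 0.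

(* gradient of fquad for symmetric A *)
Definition gradq (A : 'M[R]_d) (b : 'cV[R]_d) (x : 'cV[R]_d) : 'cV[R]_d :=
  A *m x + b.

Definition BFGS (A G : 'M[R]_d) (u : 'cV[R]_d) : 'M[R]_d :=
  G - (qf G u)^-1 *: (G *m u *m u^T *m G) + (qf A u)^-1 *: (A *m u *m u^T *m A).

Definition evec (i : 'I_d) : 'cV[R]_d := delta_mx i 0.

Definition gratio (A G : 'M[R]_d) (u : 'cV[R]_d) : R := qf G u / qf A u.

Definition theta (A G : 'M[R]_d) (u : 'cV[R]_d) : R :=
  Num.sqrt (qf ((G - A) *m invmx A *m (G - A)) u / qf (G *m invmx A *m G) u).

Definition sigma (A G : 'M[R]_d) : R := \tr (invmx A *m G) - d%:R.

End Defs.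

From mathcomp Require Import all_boot all_order all_algebra.
From mathcomp Require Import ring lra.
Set Implicit Arguments. Unset Strict Implicit. Unset Printing Implicit Defensive.
Import Order.TTheory GRing.Theory Num.Theory.
Local Open Scope ring_scope.

(* sigma(A, G) = tr(A^-1 (G - A)) >= 0 measures how far G >= A is from A.  A BFGS
   update along u != 0 lowers it by a/g - 1, with a = u^T G A^-1 G u and g = u^T G u.
   By Cauchy-Schwarz (g^2 <= a u^T A u) this is at least theta^2; along the greedy
   coordinate it is at least (mu / (d L)) sigma, because
   mu sigma <= tr(G - A) <= d L (max_j G_jj / A_jj - 1) <= d L (a/g - 1).
   Composing the two updates of a step gives the contraction, and dividing it by
   (1 - mu/(dL))^(t+1) telescopes into the weighted sum bound. *)

Lemma quad_ge0_discr_le (R : realFieldType) (a b c : R) : 0 <= c ->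
  (forall t, 0 <= a + b * t * 2 + c * t ^+ 2) -> b ^+ 2 <= a * c.
Proof.
move=> c_ge0 quad_ge0; case: (ltrgt0P c) c_ge0 quad_ge0 => // [c_gt0|->] _ quad_ge0.
- have := quad_ge0 (- b / c); set t := - b / c => quad_t_ge0.
  have ct : c * t = - b by rewrite /t mulrC divfK ?gt_eqF.
  have := mulr_ge0 (ltW c_gt0) quad_t_ge0.
  have -> : c * (a + b * t * 2 + c * t ^+ 2) = a * c + b * (c * t) * 2 + (c * t) ^+ 2.
    by ring.
  rewrite ct; nra.
- case: (eqVneq b 0) => [->|b_neq0]; first by rewrite expr0n /= mulr0.
  have := quad_ge0 (- (a + 1) / (b * 2)).
  have -> : b * (- (a + 1) / (b * 2)) * 2 = - (a + 1) by field.
  rewrite expr2 !mul0r addr0; lra.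
Qed.

Section BilinearForm.
Variables (R : rcfType) (n : nat).
Implicit Types (M N X Y : 'M[R]_n) (u v w : 'cV[R]_n) (i j : 'I_n).

Definition bform M u v : R := (u^T *m M *m v) 0 0.

Lemma qf_bform M u : qf M u = bform M u u.
Proof. by []. Qed.

Lemma bform_trmx M u v : bform M u v = bform M^T v u.
Proof.
rewrite /bform; transitivity ((u^T *m M *m v)^T 0 0); first by rewrite [RHS]mxE.
by rewrite !trmx_mul trmxK mulmxA.
Qed.

Lemma bform_sym M u v : symmx M -> bform M u v = bform M v u.
Proof. by move=> sM; rewrite bform_trmx sM. Qed.

Lemma bformDl M u v w : bform M (v + w) u = bform M v u + bform M w u.
Proof. by rewrite /bform linearD /= !mulmxDl mxE. Qed.

Lemma bformDr M u v w : bform M u (v + w) = bform M u v + bform M u w.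
Proof. by rewrite /bform mulmxDr mxE. Qed.

Lemma bformZl M u v (a : R) : bform M (a *: v) u = a * bform M v u.
Proof. by rewrite /bform linearZ /= -!scalemxAl mxE. Qed.

Lemma bformZr M u v (a : R) : bform M u (a *: v) = a * bform M u v.
Proof. by rewrite /bform -scalemxAr mxE. Qed.

Lemma bform_addmx M N u v : bform (M + N) u v = bform M u v + bform N u v.
Proof. by rewrite /bform mulmxDr mulmxDl mxE. Qed.

Lemma bform_oppmx M u v : bform (- M) u v = - bform M u v.
Proof. by rewrite /bform mulmxN mulNmx mxE. Qed.

Lemma bform_scalemx M u v (a : R) : bform (a *: M) u v = a * bform M u v.
Proof. by rewrite /bform -scalemxAr -scalemxAl mxE. Qed.

Lemma bform_mulmx M X Y u v : bform M (X *m u) (Y *m v) = bform (X^T *m M *m Y) u v.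
Proof. by rewrite /bform trmx_mul !mulmxA. Qed.

Lemma bform_evec M i j : bform M (evec R i) (evec R j) = M i j.
Proof. by rewrite /bform /evec trmx_delta -rowE -colE !mxE. Qed.

Lemma qf_evec M i : qf M (evec R i) = M i i.
Proof. exact: bform_evec. Qed.

Lemma qf_submx M N u : qf (M - N) u = qf M u - qf N u.
Proof. by rewrite !qf_bform bform_addmx bform_oppmx. Qed.

Lemma qf_scalar_mx (a : R) u : qf a%:M u = a * qf 1%:M u.
Proof. by rewrite -[in LHS]scalemx1 qf_bform bform_scalemx. Qed.

Lemma qf_addZ M u v (t : R) : symmx M ->
  qf M (u + t *: v) = qf M u + bform M u v * t * 2 + qf M v * t ^+ 2.
Proof.
move=> sM; rewrite !qf_bform !bformDl !bformDr !bformZl !bformZr (bform_sym v u sM).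
ring.
Qed.

Lemma qf_rank1 X Y u v : qf (X *m u *m u^T *m Y) v = bform X v u * bform Y u v.
Proof.
rewrite /qf /bform.
have -> : v^T *m (X *m u *m u^T *m Y) *m v = (v^T *m X *m u) *m (u^T *m Y *m v).
  by rewrite !mulmxA.
by rewrite mxE big_ord1.
Qed.

Lemma mxtrace_rank1 M X Y u : \tr (M *m (X *m u *m u^T *m Y)) = qf (Y *m M *m X) u.
Proof.
have -> : M *m (X *m u *m u^T *m Y) = (M *m X *m u) *m (u^T *m Y) by rewrite !mulmxA.
by rewrite mxtrace_mulC /mxtrace big_ord1 /qf !mulmxA.
Qed.

Lemma qf1_ge0 u : 0 <= qf 1%:M u.
Proof.
rewrite /qf mulmx1 mxE; apply: sumr_ge0 => i _.
by rewrite mxE -expr2 sqr_ge0.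
Qed.

Lemma qf1_gt0 u : u != 0 -> 0 < qf 1%:M u.
Proof.
move=> u_neq0; rewrite lt_def qf1_ge0 andbT.
apply: contraNneq u_neq0; rewrite /qf mulmx1 mxE => /eqP.
rewrite psumr_eq0 => [/allP u0|k _]; last by rewrite mxE -expr2 sqr_ge0.
apply/eqP/matrixP => i j; rewrite (ord1 j) mxE.
by move: (u0 i (mem_index_enum _)); rewrite mxE -expr2 sqrf_eq0 => /eqP.
Qed.

Lemma evec_neq0 i : evec R i != 0.
Proof. by apply/eqP => /matrixP/(_ i 0)/eqP; rewrite !mxE !eqxx oner_eq0. Qed.

Lemma qf_gt0_unitmx M : (forall u, u != 0 -> 0 < qf M u) -> M \in unitmx.
Proof.
move=> M_pd; rewrite -row_free_unit -kermx_eq0; apply/eqP/row_matrixP => i.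
rewrite row0; set r := row i (kermx M).
have rM : r *m M = 0 by rewrite /r -row_mul mulmx_ker row0.
apply/eqP; apply: contraT => r_neq0.
have rT_neq0 : r^T != 0 by rewrite -(inj_eq (@trmx_inj _ _ _)) trmxK trmx0.
by have := M_pd _ rT_neq0; rewrite /qf trmxK rM mul0mx mxE ltxx.
Qed.

Lemma cauchy_schwarz M u v : symmx M -> psdmx M -> bform M u v ^+ 2 <= qf M u * qf M v.
Proof.
move=> sM pM; apply: quad_ge0_discr_le; first exact: pM.
by move=> t; rewrite -qf_addZ.
Qed.

End BilinearForm.

Section PsdTrace.
Variables (R : rcfType) (n : nat).
Implicit Types (B M : 'M[R]_n) (i j : 'I_n).

Lemma psd_diag_ge0 M i : psdmx M -> 0 <= M i i.
Proof. by move=> pM; rewrite -qf_evec pM. Qed.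

Lemma psd_diag0 M : symmx M -> psdmx M -> (forall i, M i i = 0) -> M = 0.
Proof.
move=> sM pM M0; apply/matrixP => i j; rewrite mxE.
have := cauchy_schwarz (evec R i) (evec R j) sM pM.
rewrite !qf_evec bform_evec !M0 mul0r => Mij_le0.
by apply/eqP; rewrite -sqrf_eq0 eq_le Mij_le0 sqr_ge0.
Qed.

Definition deflate M i := M - (M i i)^-1 *: (col i M *m (col i M)^T).

Lemma deflateE M i : M = deflate M i + (M i i)^-1 *: (col i M *m (col i M)^T).
Proof. by rewrite subrK. Qed.

Lemma deflate_diag M i j : deflate M i j j = M j j - (M i i)^-1 * M j i ^+ 2.
Proof. by rewrite !mxE big_ord1 !mxE expr2. Qed.

Lemma deflate_sym M i : symmx M -> symmx (deflate M i).
Proof. by move=> sM; rewrite /symmx /deflate linearB linearZ /= trmx_mul trmxK sM. Qed.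

(* Cauchy-Schwarz gives [(v^T M e_i)^2 <= (v^T M v) M_ii]. *)
Lemma deflate_psd M i : symmx M -> psdmx M -> psdmx (deflate M i).
Proof.
move=> sM pM v; rewrite /deflate.
have -> : col i M *m (col i M)^T = M *m evec R i *m (evec R i)^T *m M^T.
  by rewrite colE trmx_mul !mulmxA.
rewrite qf_submx [qf (_ *: _) _]qf_bform bform_scalemx -qf_bform qf_rank1 -bform_trmx -expr2.
rewrite subr_ge0; have := cauchy_schwarz v (evec R i) sM pM; rewrite qf_evec => CS.
have [->|Mii_neq0] := eqVneq (M i i) 0; first by rewrite invr0 mul0r pM.
by rewrite mulrC ler_pdivrMr // lt_def Mii_neq0 psd_diag_ge0.
Qed.

Lemma deflate_support M i : symmx M -> psdmx M -> M i i != 0 ->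
  [set j | deflate M i j j != 0] \proper [set j | M j j != 0].
Proof.
move=> sM pM Mii_neq0; apply/properP; split.
  apply/subsetP => j; rewrite !inE; apply: contraNneq => Mjj0.
  apply/eqP; apply: le_anti; rewrite (psd_diag_ge0 j (deflate_psd i sM pM)) andbT.
  by rewrite deflate_diag Mjj0 sub0r oppr_le0 mulr_ge0 ?sqr_ge0 ?invr_ge0 ?psd_diag_ge0.
exists i; first by rewrite inE.
by rewrite inE negbK deflate_diag expr2 mulKf ?subrr.
Qed.

(* Peel off rank-one terms M_ii^-1 (M e_i)(M e_i)^T, each contributing
   qf B (M e_i) / M_ii >= 0, until M vanishes. *)
Lemma mxtrace_psd_ge0 B M : psdmx B -> symmx M -> psdmx M -> 0 <= \tr (B *m M).
Proof.
move=> pB; have [k] := ubnP #|[set i | M i i != 0]|.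
elim: k M => // k IH M supp_lt sM pM.
have [i /= Mii_neq0 | Mdiag0] := pickP [pred i | M i i != 0]; last first.
  rewrite (psd_diag0 sM pM) ?mulmx0 ?mxtrace0 // => i.
  by apply/eqP; move: (Mdiag0 i) => /= /negbFE.
rewrite (deflateE M i) mulmxDr mxtraceD -scalemxAr mxtraceZ.
have -> : \tr (B *m (col i M *m (col i M)^T)) = qf B (col i M).
  by rewrite mulmxA mxtrace_mulC /mxtrace big_ord1 /qf mulmxA.
apply: addr_ge0; last by rewrite mulr_ge0 ?invr_ge0 ?psd_diag_ge0.
apply: IH; [|exact: deflate_sym|exact: deflate_psd].
by rewrite -ltnS (leq_trans _ supp_lt) // ltnS proper_card // deflate_support.
Qed.

End PsdTrace.

Section BFGSUpdate.
Variables (R : rcfType) (n : nat).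
Implicit Types (A G M : 'M[R]_n) (u v : 'cV[R]_n).

Lemma symmxB A G : symmx A -> symmx G -> symmx (G - A).
Proof. by move=> sA sG; rewrite /symmx linearB /= sA sG. Qed.

Lemma symmx_invmx M : symmx M -> symmx (invmx M).
Proof. by move=> sM; rewrite /symmx trmx_inv sM. Qed.

Lemma BFGS0 A G : BFGS A G 0 = G.
Proof. by rewrite /BFGS !mulmx0 !mul0mx !scaler0 subr0 addr0. Qed.

Lemma BFGS_sym A G u : symmx A -> symmx G -> symmx (BFGS A G u).
Proof.
move=> sA sG; rewrite /symmx /BFGS linearD linearB !linearZ /= !trmx_mul !trmxK sA sG.
by rewrite !mulmxA.
Qed.

Variables (A : 'M[R]_n) (mu : R).
Hypotheses (mu_gt0 : 0 < mu) (sA : symmx A) (pA : psdmx (A - mu%:M)).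

Lemma mu_qf1_le_qf u : mu * qf 1%:M u <= qf A u.
Proof. by have := pA u; rewrite qf_submx qf_scalar_mx subr_ge0. Qed.

Lemma qf_pd_gt0 u : u != 0 -> 0 < qf A u.
Proof. by move=> u_neq0; rewrite (lt_le_trans _ (mu_qf1_le_qf u)) ?mulr_gt0 ?qf1_gt0. Qed.

Lemma unitmx_pd : A \in unitmx.
Proof. exact: qf_gt0_unitmx qf_pd_gt0. Qed.

Lemma qf_invmx u : qf (invmx A) u = qf A (invmx A *m u).
Proof. by rewrite !qf_bform bform_mulmx (symmx_invmx sA) mulVmx ?unitmx_pd ?mul1mx. Qed.

Lemma psd_invmx : psdmx (invmx A).
Proof.
move=> u; rewrite qf_invmx; have [->|u_neq0] := eqVneq (invmx A *m u) 0.
  by rewrite /qf mulmx0 mxE.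
exact/ltW/qf_pd_gt0.
Qed.

(* With [y = A^-1 v]: [mu |y|^2 <= v.y = v^T A^-1 v] and [(v.y)^2 <= |v|^2 |y|^2]. *)
Lemma psd_1_sub_invmx : psdmx (1%:M - mu *: invmx A).
Proof.
move=> v; rewrite qf_submx [qf (_ *: _) _]qf_bform bform_scalemx -qf_bform subr_ge0.
set y := invmx A *m v; set s := qf (invmx A) v.
have s_bform : s = bform 1%:M v y by rewrite /s /y /bform mulmx1 mulmxA.
have mu_y : mu * qf 1%:M y <= s by rewrite /s qf_invmx mu_qf1_le_qf.
have CS : s ^+ 2 <= qf 1%:M v * qf 1%:M y.
  by rewrite s_bform cauchy_schwarz // /symmx ?trmx1 // => w; apply: qf1_ge0.
have [->|s_neq0] := eqVneq s 0; first by rewrite mulr0 qf1_ge0.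
have s_gt0 : 0 < s by rewrite lt_def s_neq0 psd_invmx.
rewrite -(ler_pM2r s_gt0) -mulrA -expr2 (le_trans (ler_wpM2l (ltW mu_gt0) CS)) //.
by rewrite mulrCA ler_wpM2l ?qf1_ge0.
Qed.

Lemma qf_sqr_le_invmx G u : symmx G -> qf G u ^+ 2 <= qf (G *m invmx A *m G) u * qf A u.
Proof.
move=> sG; have := cauchy_schwarz (G *m u) (A *m u) (symmx_invmx sA) psd_invmx.
rewrite bform_mulmx !qf_bform !bform_mulmx -!qf_bform sG sA -(mulmxA G).
by rewrite mulVmx ?unitmx_pd // mulmx1 mulmxV ?unitmx_pd // mul1mx.
Qed.

Lemma qf_trmx_invmx_ge0 M u : 0 <= qf (M^T *m invmx A *m M) u.
Proof. by rewrite qf_bform -bform_mulmx -qf_bform psd_invmx. Qed.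

Lemma sigmaE G : sigma A G = \tr (invmx A *m (G - A)).
Proof. by rewrite /sigma mulmxBr raddfB /= mulVmx ?unitmx_pd // mxtrace1. Qed.

Lemma sigma_BFGS G u : u != 0 ->
  sigma A (BFGS A G u) = sigma A G - qf (G *m invmx A *m G) u / qf G u + 1.
Proof.
move=> u_neq0; rewrite /sigma /BFGS mulmxDr mulmxBr mxtraceD raddfB /=.
rewrite -!scalemxAr !mxtraceZ !mxtrace_rank1 mulmxV ?unitmx_pd // mul1mx.
by rewrite mulVf ?gt_eqF ?qf_pd_gt0 // mulrC; ring.
Qed.

Lemma theta_sqr G u : symmx G -> theta A G u ^+ 2 =
  (qf (G *m invmx A *m G) u - 2 * qf G u + qf A u) / qf (G *m invmx A *m G) u.
Proof.
move=> sG; have uA := unitmx_pd; have sGA := symmxB sA sG.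
have num_ge0 : 0 <= qf ((G - A) *m invmx A *m (G - A)) u.
  by rewrite -{1}sGA qf_trmx_invmx_ge0.
have den_ge0 : 0 <= qf (G *m invmx A *m G) u by rewrite -{1}sG qf_trmx_invmx_ge0.
rewrite /theta sqr_sqrtr ?divr_ge0 //.
have -> : (G - A) *m invmx A *m (G - A) = G *m invmx A *m G - G - G + A.
  rewrite mulmxBr !mulmxBl mulmxV // !mul1mx -[G *m invmx A *m A]mulmxA mulVmx //.
  by rewrite mulmx1 opprB addrA addrAC.
by rewrite !qf_bform !(bform_addmx, bform_oppmx) mulr2n; congr (_ / _); ring.
Qed.

Section Dominated.
Variable G : 'M[R]_n.
Hypotheses (sG : symmx G) (pGA : psdmx (G - A)).

Lemma qf_le_dominated u : qf A u <= qf G u.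
Proof. by have := pGA u; rewrite qf_submx subr_ge0. Qed.

(* With [b = v^T G u / u^T G u], [v^T (BFGS A G u - A) v] equals
   [(v - b u)^T (G - A) (v - b u) + (v^T A u - b u^T A u)^2 / u^T A u]. *)
Lemma BFGS_psd u : psdmx (BFGS A G u - A).
Proof.
move=> v; have [->|u_neq0] := eqVneq u 0; first by rewrite BFGS0 pGA.
have c_gt0 : 0 < qf A u := qf_pd_gt0 u_neq0.
have g_gt0 : 0 < qf G u := lt_le_trans c_gt0 (qf_le_dominated u).
rewrite /BFGS qf_bform !(bform_addmx, bform_oppmx, bform_scalemx) -!qf_bform !qf_rank1.
rewrite (bform_sym u v sG) (bform_sym u v sA).
set g := qf G u; set c := qf A u; set pg := bform G v u; set pa := bform A v u.
set b := pg / g; have := pGA (v + (- b) *: u).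
rewrite qf_addZ; last exact: symmxB.
rewrite !qf_submx bform_addmx bform_oppmx -/pg -/pa -/g -/c.
have -> : qf G v - g^-1 * (pg * pg) + c^-1 * (pa * pa) - qf A v =
    (qf G v - qf A v + (pg - pa) * - b * 2 + (g - c) * (- b) ^+ 2)
    + c^-1 * (pa - b * c) ^+ 2.
  by rewrite /b; field; rewrite !gt_eqF.
by move=> ?; rewrite addr_ge0 // mulr_ge0 ?sqr_ge0 // invr_ge0 ltW.
Qed.

Lemma BFGS_dominated u : symmx (BFGS A G u) /\ psdmx (BFGS A G u - A).
Proof. by split; [exact: BFGS_sym | exact: BFGS_psd]. Qed.

Lemma sigma_ge0 : 0 <= sigma A G.
Proof. by rewrite sigmaE; apply: mxtrace_psd_ge0 psd_invmx (symmxB sA sG) pGA. Qed.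

Lemma mul_sigma_le_mxtrace : mu * sigma A G <= \tr (G - A).
Proof.
rewrite sigmaE -subr_ge0.
have := mxtrace_psd_ge0 psd_1_sub_invmx (symmxB sA sG) pGA.
by rewrite mulmxBl mul1mx -scalemxAl raddfB /= mxtraceZ.
Qed.

Lemma sigma_BFGS_le u : sigma A (BFGS A G u) <= sigma A G - theta A G u ^+ 2.
Proof.
have [->|u_neq0] := eqVneq u 0.
  by rewrite BFGS0 /theta /qf !mulmx0 !mxE mul0r sqrtr0 expr0n subr0.
rewrite sigma_BFGS // theta_sqr // -addrA lerD2l.
have c_gt0 : 0 < qf A u := qf_pd_gt0 u_neq0.
have c_le_g := qf_le_dominated u.
have CS := qf_sqr_le_invmx u sG.
set a := qf (G *m invmx A *m G) u in CS *; set g := qf G u in c_le_g CS *.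
set c := qf A u in c_gt0 c_le_g CS *.
have g_gt0 : 0 < g := lt_le_trans c_gt0 c_le_g.
have a_gt0 : 0 < a by rewrite -(pmulr_lgt0 _ c_gt0) (lt_le_trans _ CS) ?exprn_gt0.
rewrite -[- (a / g) + 1]opprK opprD opprK lerN2.
have -> : a / g - 1 = (a - 2 * g + c) / a + ((a - g) ^+ 2 + g * (g - c)) / (g * a).
  by field; rewrite !gt_eqF.
rewrite lerDl; apply: divr_ge0; last by rewrite mulr_ge0 ?ltW.
by apply: addr_ge0 (sqr_ge0 _) (mulr_ge0 (ltW g_gt0) _); rewrite subr_ge0.
Qed.

Lemma gratio_ge1 u : u != 0 -> 1 <= gratio A G u.
Proof. by move=> u_neq0; rewrite ler_pdivlMr ?qf_pd_gt0 // mul1r qf_le_dominated. Qed.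

Lemma gratio_le u : u != 0 -> gratio A G u <= qf (G *m invmx A *m G) u / qf G u.
Proof.
move=> u_neq0; have c_gt0 := qf_pd_gt0 u_neq0.
have g_gt0 := lt_le_trans c_gt0 (qf_le_dominated u).
by rewrite ler_pdivrMr // mulrAC ler_pdivlMr // -expr2 qf_sqr_le_invmx.
Qed.

Variable L : R.
Hypothesis pLA : psdmx (L%:M - A).

Lemma diag_le_bound j : A j j <= L.
Proof. by have := pLA (evec R j); rewrite qf_evec !mxE eqxx mulr1n subr_ge0. Qed.

Variable k : 'I_n.
Hypothesis k_greedy : forall j, gratio A G (evec R j) <= gratio A G (evec R k).

Lemma diag_sub_le_greedy j : (G - A) j j <= L * (gratio A G (evec R k) - 1).
Proof.
have Ajj_gt0 : 0 < A j j by rewrite -qf_evec qf_pd_gt0 ?evec_neq0.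
have := gratio_ge1 (evec_neq0 R k); have := k_greedy j.
rewrite /gratio !qf_evec ler_pdivrMr //; set r := _ / _.
by have := diag_le_bound j; rewrite !mxE; nra.
Qed.

Lemma mxtrace_sub_le_greedy : \tr (G - A) <= n%:R * (L * (gratio A G (evec R k) - 1)).
Proof.
rewrite /mxtrace (le_trans (ler_sum _ (fun j _ => diag_sub_le_greedy j))) //.
by rewrite sumr_const card_ord mulr_natl.
Qed.

Lemma sigma_BFGS_greedy :
  sigma A (BFGS A G (evec R k)) <= (1 - mu / (n%:R * L)) * sigma A G.
Proof.
have n_gt0 : (0 < n)%N := leq_ltn_trans (leq0n k) (ltn_ord k).
have L_gt0 : 0 < L.
  by rewrite (lt_le_trans _ (diag_le_bound k)) // -qf_evec qf_pd_gt0 ?evec_neq0.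
have nL_gt0 : 0 < n%:R * L by rewrite mulr_gt0 ?ltr0n.
have ek_neq0 := evec_neq0 R k.
rewrite sigma_BFGS //.
set a := qf (G *m invmx A *m G) _; set g := qf G _.
have : mu / (n%:R * L) * sigma A G <= a / g - 1.
  rewrite mulrAC ler_pdivrMr // (le_trans mul_sigma_le_mxtrace) //.
  rewrite (le_trans mxtrace_sub_le_greedy) // mulrA mulrC.
  by rewrite ler_wpM2r ?(ltW nL_gt0) // lerD2r gratio_le.
lra.
Qed.

End Dominated.

End BFGSUpdate.

Section WeightedSum.
Variables (R : realFieldType) (q : R) (s e : nat -> R).
Hypotheses (q_ge0 : 0 <= q) (s_ge0 : forall t, 0 <= s t) (e_le_s : forall t, e t <= s t).
Hypothesis s_contract : forall t, s t.+1 <= q * (s t - e t).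

(* For [q = 0] every term but the first is [_ / 0 = 0]. *)
Lemma weighted_sum_le t : \sum_(i < t) e i / q ^+ i <= s 0.
Proof.
have [q0|q_neq0] := eqVneq q 0.
  case: t => [|t]; first by rewrite big_ord0 s_ge0.
  rewrite big_ord_recl big1 => [|i _]; last by rewrite q0 exprS mul0r invr0 mulr0.
  by rewrite expr0 divr1 addr0 e_le_s.
have q_gt0 : 0 < q by rewrite lt_def q_neq0 q_ge0.
suff inv u : \sum_(i < u) e i / q ^+ i + s u / q ^+ u <= s 0.
  by rewrite (le_trans _ (inv t)) // lerDl divr_ge0 ?exprn_ge0.
elim: u => [|u IH]; first by rewrite big_ord0 add0r expr0 divr1.
rewrite (le_trans _ IH) // big_ord_recr /= -addrA lerD2l.
have -> : s u / q ^+ u = e u / q ^+ u + (s u - e u) / q ^+ u.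
  by rewrite -mulrDl addrC subrK.
rewrite lerD2l exprS invfM mulrA ler_pM2r ?invr_gt0 ?exprn_gt0 //.
by rewrite ler_pdivrMr // mulrC.
Qed.

End WeightedSum.

Lemma contraction_rate_ge0 (R : realFieldType) (d : nat) (mu L : R) :
  (0 < d)%N -> 0 < mu -> mu <= L -> 0 <= 1 - mu / (d%:R * L).
Proof.
move=> d_gt0 mu_gt0 mu_le_L; have L_gt0 := lt_le_trans mu_gt0 mu_le_L.
rewrite subr_ge0 ler_pdivrMr ?mulr_gt0 ?ltr0n // mul1r.
have : 1 <= d%:R :> R by rewrite ler1n.
nra.
Qed.

Theorem lemma4 (R : rcfType) (d : nat) (mu L : R) (A : 'M[R]_d) (b : 'cV[R]_d)
    (x : nat -> 'cV[R]_d) (G Gbar : nat -> 'M[R]_d) (idx : nat -> 'I_d) :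
  (0 < d)%N -> 0 < mu -> mu <= L ->
  symmx A -> psdmx (A - mu%:M) -> psdmx (L%:M - A) ->
  G 0%N = L%:M ->
  (forall t, x t.+1 = x t - invmx (G t) *m gradq A b (x t)) ->
  (forall t, Gbar t = BFGS A (G t) (x t.+1 - x t)) ->
  (forall t (j : 'I_d), gratio A (Gbar t) (evec R j) <= gratio A (Gbar t) (evec R (idx t))) ->
  (forall t, G t.+1 = BFGS A (Gbar t) (evec R (idx t))) ->
  (forall t, (forall i, (i <= t)%N -> gradq A b (x i) != 0) ->
     sigma A (G t.+1) <=
       (1 - mu / (d%:R * L)) * (sigma A (G t) - theta A (G t) (x t.+1 - x t) ^+ 2))
  /\
  (forall t, (1 <= t)%N -> (forall i, (i < t)%N -> gradq A b (x i) != 0) ->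
     \sum_(i < t) theta A (G i) (x i.+1 - x i) ^+ 2 / (1 - mu / (d%:R * L)) ^+ i
       <= sigma A (G 0%N)).
Proof.
move=> d_gt0 mu_gt0 mu_le_L sA pA pLA G0 _ Gbar_def greedy G_def.
set q := 1 - mu / (d%:R * L).
have q_ge0 : 0 <= q := contraction_rate_ge0 d_gt0 mu_gt0 mu_le_L.
have Gbar_dominated t : symmx (G t) -> psdmx (G t - A) ->
    symmx (Gbar t) /\ psdmx (Gbar t - A).
  by move=> sG pGA; rewrite Gbar_def; apply: (BFGS_dominated mu_gt0 sA pA sG pGA).
have dominated t : symmx (G t) /\ psdmx (G t - A).
  elim: t => [|t [sG pGA]]; first by rewrite G0; split; rewrite // /symmx tr_scalar_mx.
  have [sGbar pGbar] := Gbar_dominated t sG pGA.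
  by rewrite G_def; apply: (BFGS_dominated mu_gt0 sA pA sGbar pGbar).
have sigma_Gbar t :
    sigma A (Gbar t) <= sigma A (G t) - theta A (G t) (x t.+1 - x t) ^+ 2.
  have [sG pGA] := dominated t.
  by rewrite Gbar_def; exact: (sigma_BFGS_le mu_gt0 sA pA sG pGA).
have sigma_step t :
    sigma A (G t.+1) <= q * (sigma A (G t) - theta A (G t) (x t.+1 - x t) ^+ 2).
  have [sG pGA] := dominated t; have [sGbar pGbar] := Gbar_dominated t sG pGA.
  rewrite G_def (le_trans (sigma_BFGS_greedy mu_gt0 sA pA sGbar pGbar pLA (greedy t))) //.
  by rewrite -/q ler_wpM2l.
have sigmaG_ge0 t : 0 <= sigma A (G t).
  by have [sG pGA] := dominated t; exact: (sigma_ge0 mu_gt0 sA pA sG pGA).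
split=> [t _|t _ _]; first exact: sigma_step.
apply: (weighted_sum_le q_ge0 sigmaG_ge0 _ sigma_step) => i.
have [sG pGA] := dominated i; have [sGbar pGbar] := Gbar_dominated i sG pGA.
by have := sigma_ge0 mu_gt0 sA pA sGbar pGbar; have := sigma_Gbar i; lra.
Qed.
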